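(* For every $p\in(0,1)$ and every $a>a_*=p^p(1-p)^{1-p}$, $\Upsilon_p(a)<0$, where $$\Upsilon_p(a)=\int_\beta^\alpha\frac{\eta_{p,a}(\kappa)}{\sqrt{Q_{p,a}(\kappa)}}\,d\kappa,$$ $$\eta_{p,a}(\kappa)=-(p+1)a\kappa^{1-p}-(2-p)a\kappa^{-1-p}+(1-p)^2(2p+1)\kappa^{p+1}+2(4p^2-4p+1)\kappa^{p-1}+p^2(3-2p)\kappa^{p-3},$$ $Q_{p,a}(\kappa)=a\kappa^{2(1-p)}-(1-p)^2\kappa^2-p^2$, and $\beta<\alpha$ are the two positive zeros of $Q_{p,a}$.
   Context: For $p\in(0,1)$ and $a>a_*$, $Q_{p,a}$ has exactly two positive zeros $\beta<\alpha$ and is positive between them; the integral is a convergent improper integral. (Geometrically, $\Upsilon_p(a)$ is the second variation of $\mathbf{\Theta}_p$ in the direction $\phi\equiv1$ along a half-period of the curvature of the $p$-elastic curve $\gamma_a$.) *)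

From Stdlib Require Import Reals.
From Coquelicot Require Import Coquelicot.
Open Scope R_scope.

Definition a_star (p : R) : R := Rpower p p * Rpower (1 - p) (1 - p).

Definition Q (p a k : R) : R :=
  a * Rpower k (2 * (1 - p)) - (1 - p) ^ 2 * k ^ 2 - p ^ 2.

Definition eta (p a k : R) : R :=
  - (p + 1) * a * Rpower k (1 - p)
  - (2 - p) * a * Rpower k (- 1 - p)
  + (1 - p) ^ 2 * (2 * p + 1) * Rpower k (p + 1)
  + 2 * (4 * p ^ 2 - 4 * p + 1) * Rpower k (p - 1)
  + p ^ 2 * (3 - 2 * p) * Rpower k (p - 3).

Definition Upsilon_integrand (p a k : R) : R := eta p a k / sqrt (Q p a k).

From Stdlib Require Import Reals Lra Psatz.
From Coquelicot Require Import Coquelicot.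
Open Scope R_scope.

(* With w(k) = -(p+1)/2 k^p + (2-p)/2 k^(p-2) one has the identity
     eta = 2 w' Q + w Q' + rho,
   rho(k) = -p^2 (1-p)^2 (k^(p+1) + k^(p-3)) - p (1-p) (1 + 2p(1-p)) k^(p-1) < 0,
   so that eta / sqrt Q = 2 (w sqrt Q)' + rho / sqrt Q on (beta, alpha).  The exact
   derivative integrates to 0 since sqrt Q vanishes at both roots, and rho / sqrt Q is
   negative.  It is integrable because the roots are simple: near them it is bounded below
   by a multiple of (sqrt Q)'.  Positivity of Q between the roots and their simplicity come
   from Q = k^(2(1-p)) V with V increasing up to kappa0 = sqrt (p / (1-p)) and decreasing
   after it. *)

Lemma Rpower_affine_exponent (k p u e : R) (m n : Z) :
  0 < k -> u = Rpower k p -> e = IZR m * p + IZR n ->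
  Rpower k e = powerRZ u m * powerRZ k n.
Proof.
  intros Hk -> ->.
  rewrite Rpower_plus, (powerRZ_Rpower k n Hk), (powerRZ_Rpower (Rpower k p) m (exp_pos _)).
  rewrite Rpower_mult, (Rmult_comm p). reflexivity.
Qed.

Lemma exp_mul_ln (x e : R) : exp (e * ln x) = Rpower x e.
Proof. reflexivity. Qed.

(* Rewrites [Rpower k e] as [u ^ m * k ^ n] when [e = m p + n], with [u = Rpower k p]
   and [-2 <= m <= 2], [-4 <= n <= 3]: enough for every exponent occurring below.  The
   [exp (e * ln k)] terms left by [auto_derive] are first folded back into [Rpower]. *)
Ltac split_exponent_n k p u e Hk Hu m :=
  first [ rewrite (Rpower_affine_exponent k p u e m 0 Hk Hu) by ring
        | rewrite (Rpower_affine_exponent k p u e m 1 Hk Hu) by ring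
        | rewrite (Rpower_affine_exponent k p u e m 2 Hk Hu) by ring
        | rewrite (Rpower_affine_exponent k p u e m 3 Hk Hu) by ring
        | rewrite (Rpower_affine_exponent k p u e m (-1) Hk Hu) by ring
        | rewrite (Rpower_affine_exponent k p u e m (-2) Hk Hu) by ring
        | rewrite (Rpower_affine_exponent k p u e m (-3) Hk Hu) by ring
        | rewrite (Rpower_affine_exponent k p u e m (-4) Hk Hu) by ring ].

Ltac split_exponent k p u e Hk Hu :=
  first [ split_exponent_n k p u e Hk Hu 0%Z | split_exponent_n k p u e Hk Hu 1%Z
        | split_exponent_n k p u e Hk Hu 2%Z | split_exponent_n k p u e Hk Hu (-1)%Z
        | split_exponent_n k p u e Hk Hu (-2)%Z ].

Ltac Rpower_normalize k p Hk :=
  rewrite ?exp_mul_ln;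
  let u := fresh "u" in let Hu := fresh "Hu" in
  remember (Rpower k p) as u eqn:Hu;
  assert (0 < u) by (rewrite Hu; apply exp_pos);
  repeat match goal with |- context [Rpower k ?e] => split_exponent k p u e Hk Hu end;
  simpl powerRZ; rewrite ?Rmult_1_r.

Ltac Rpower_field k p Hk := Rpower_normalize k p Hk; field; repeat split; lra.

Lemma mean_value_open (F f : R -> R) u v : u < v ->
  (forall x, u <= x <= v -> is_derive F x (f x)) ->
  exists c, u < c < v /\ F v - F u = f c * (v - u).
Proof.
  intros Huv HF. destruct (MVT_cor2 F f u v Huv) as [c [E Hc]].
  - intros x Hx. apply is_derive_Reals, HF, Hx.
  - exists c. split; assumption.
Qed.

Lemma is_derive_nonneg_le (F f : R -> R) u v : u <= v ->
  (forall x, u <= x <= v -> is_derive F x (f x)) ->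
  (forall x, u < x < v -> 0 <= f x) -> F u <= F v.
Proof.
  intros Huv HF Hf. destruct (Rle_lt_or_eq_dec _ _ Huv) as [Hlt | ->]; [|lra].
  destruct (mean_value_open F f u v Hlt HF) as [c [Hc E]].
  assert (0 <= f c) by (apply Hf, Hc). nra.
Qed.

Lemma is_derive_pos_lt (F f : R -> R) u v : u < v ->
  (forall x, u <= x <= v -> is_derive F x (f x)) ->
  (forall x, u < x < v -> 0 < f x) -> F u < F v.
Proof.
  intros Huv HF Hf. destruct (mean_value_open F f u v Huv HF) as [c [Hc E]].
  assert (0 < f c) by (apply Hf, Hc). nra.
Qed.

Lemma Rabs_increment_le_of_is_derive (F G f g : R -> R) u v : u <= v ->
  (forall x, u <= x <= v -> is_derive F x (f x) /\ is_derive G x (g x)) ->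
  (forall x, u < x < v -> g x <= f x <= 0) ->
  Rabs (F v - F u) <= Rabs (G v - G u).
Proof.
  intros Huv HD Hfg.
  assert (HFdecr : - F u <= - F v).
  { apply (is_derive_nonneg_le (fun x => - F x) (fun x => - f x)); [exact Huv| |].
    - intros x Hx. apply (is_derive_opp F), HD, Hx.
    - intros x Hx. specialize (Hfg x Hx). lra. }
  assert (HFG : F u - G u <= F v - G v).
  { apply (is_derive_nonneg_le (fun x => F x - G x) (fun x => f x - g x)); [exact Huv| |].
    - intros x Hx. apply (is_derive_minus F G); apply HD, Hx.
    - intros x Hx. specialize (Hfg x Hx). lra. }
  rewrite (Rabs_left1 (F v - F u)), (Rabs_left1 (G v - G u)); lra.
Qed.

Lemma filterlim_of_dominated_increments {Fl : (R -> Prop) -> Prop} {FF : ProperFilter Fl}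
  (F G : R -> R) (P : R -> Prop) (l : R) :
  Fl P -> (forall u v, P u -> P v -> Rabs (F v - F u) <= Rabs (G v - G u)) ->
  filterlim G Fl (locally l) -> exists l', filterlim F Fl (locally l').
Proof.
  intros HP Hdom HG. apply (proj1 (filterlim_locally_cauchy F)). intros eps.
  assert (Heps : 0 < eps / 2) by (apply Rdiv_lt_0_compat; [apply cond_pos | lra]).
  exists (fun x => P x /\ Rabs (G x - l) < eps / 2). split.
  - apply filter_and; [exact HP|].
    apply (HG (fun y => Rabs (y - l) < eps / 2)). exact (locally_ball l (mkposreal _ Heps)).
  - intros u v [Pu Gu] [Pv Gv]. change (Rabs (F v - F u) < eps).
    eapply Rle_lt_trans; [exact (Hdom u v Pu Pv)|].
    replace (G v - G u) with ((G v - l) + - (G u - l)) by ring.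
    eapply Rle_lt_trans; [apply Rabs_triang|]. rewrite Rabs_Ropp. lra.
Qed.

Lemma Rmin_Rmax_in_interval lo hi u v z : lo < u < hi -> lo < v < hi ->
  Rmin u v <= z <= Rmax u v -> lo < z < hi.
Proof.
  intros Hu Hv Hz. split.
  - apply Rlt_le_trans with (Rmin u v); [apply Rmin_glb_lt|]; lra.
  - apply Rle_lt_trans with (Rmax u v); [|apply Rmax_lub_lt]; lra.
Qed.

Lemma at_right_interval lo hi : lo < hi -> at_right lo (fun x => lo < x < hi).
Proof.
  intros H. assert (Hd : 0 < hi - lo) by lra. exists (mkposreal _ Hd).
  intros y Hy Hlo. change (Rabs (y - lo) < hi - lo) in Hy. apply Rabs_def2 in Hy. lra.
Qed.

Lemma at_left_interval lo hi : lo < hi -> at_left hi (fun x => lo < x < hi).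
Proof.
  intros H. assert (Hd : 0 < hi - lo) by lra. exists (mkposreal _ Hd).
  intros y Hy Hhi. change (Rabs (y - hi) < hi - lo) in Hy. apply Rabs_def2 in Hy. lra.
Qed.

Definition dQ (p a k : R) := 2 * (1 - p) * k * (a / Rpower k (2 * p) - (1 - p)).

Lemma is_derive_Q p a k : 0 < k -> is_derive (Q p a) k (dQ p a k).
Proof. intros Hk. unfold Q, dQ, Rpower. auto_derive; [lra|]. Rpower_field k p Hk. Qed.

Definition V (p a k : R) := a - (1 - p) ^ 2 * Rpower k (2 * p) - p ^ 2 * Rpower k (2 * p - 2).
Definition dV (p k : R) := 2 * p * (1 - p) * Rpower k (2 * p - 3) * (p - (1 - p) * k ^ 2).
Definition kappa0 (p : R) := sqrt (p / (1 - p)).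

Lemma Q_eq_V p a k : 0 < k -> Q p a k = Rpower k (2 * (1 - p)) * V p a k.
Proof. intros Hk. unfold Q, V. Rpower_field k p Hk. Qed.

Lemma V_root p a k : 0 < k -> Q p a k = 0 -> V p a k = 0.
Proof.
  intros Hk HQ. rewrite Q_eq_V in HQ by exact Hk.
  assert (0 < Rpower k (2 * (1 - p))) by apply exp_pos. nra.
Qed.

Lemma is_derive_V p a k : 0 < k -> is_derive (V p a) k (dV p k).
Proof. intros Hk. unfold V, dV, Rpower. auto_derive; [lra|]. Rpower_field k p Hk. Qed.

Lemma kappa0_pos p : 0 < p < 1 -> 0 < kappa0 p.
Proof. intros Hp. apply sqrt_lt_R0, Rdiv_lt_0_compat; lra. Qed.

Lemma kappa0_sqr p : 0 < p < 1 -> kappa0 p ^ 2 = p / (1 - p).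
Proof.
  intros Hp. apply pow2_sqrt, Rlt_le, Rdiv_lt_0_compat; lra.
Qed.

Lemma kappa0_gap p k : 0 < p < 1 ->
  p - (1 - p) * k ^ 2 = (1 - p) * (kappa0 p - k) * (kappa0 p + k).
Proof.
  intros Hp. replace ((1 - p) * (kappa0 p - k) * (kappa0 p + k))
    with ((1 - p) * kappa0 p ^ 2 - (1 - p) * k ^ 2) by ring.
  rewrite kappa0_sqr by exact Hp. field. lra.
Qed.

Lemma dV_pos p k : 0 < p < 1 -> 0 < k < kappa0 p -> 0 < dV p k.
Proof.
  intros Hp Hk. unfold dV. rewrite kappa0_gap by exact Hp.
  assert (0 < Rpower k (2 * p - 3)) by apply exp_pos.
  repeat apply Rmult_lt_0_compat; lra.
Qed.

Lemma dV_neg p k : 0 < p < 1 -> kappa0 p < k -> dV p k < 0.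
Proof.
  intros Hp Hk. assert (H0 := kappa0_pos p Hp). unfold dV. rewrite kappa0_gap by exact Hp.
  assert (0 < Rpower k (2 * p - 3)) by apply exp_pos.
  assert (0 < 2 * p * (1 - p) * Rpower k (2 * p - 3) * (1 - p) * (kappa0 p + k))
    by (repeat apply Rmult_lt_0_compat; lra).
  nra.
Qed.

Lemma dQ_root_neq0 p a k : 0 < p < 1 -> 0 < k -> Q p a k = 0 -> k <> kappa0 p ->
  dQ p a k <> 0.
Proof.
  intros Hp Hk HQ Hk0.
  assert (E : dQ p a k = 2 * (1 - p) * p * (p - (1 - p) * k ^ 2) / k).
  { apply V_root in HQ; [|exact Hk]. revert HQ. unfold V, dQ. Rpower_normalize k p Hk.
    intros HV. replace a with ((1 - p) ^ 2 * (u * u) + p ^ 2 * (u * u * / (k * k))) by lra.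
    field. lra. }
  assert (H0 := kappa0_pos p Hp).
  rewrite E, kappa0_gap by exact Hp. unfold Rdiv.
  repeat apply Rmult_integral_contrapositive_currified; try lra.
  apply Rinv_neq_0_compat. lra.
Qed.

Definition w (p k : R) := - (p + 1) / 2 * Rpower k p + (2 - p) / 2 * Rpower k (p - 2).
Definition dw (p k : R) :=
  - (p + 1) / 2 * p * Rpower k (p - 1) + (2 - p) / 2 * (p - 2) * Rpower k (p - 3).
Definition rho (p k : R) :=
  - p ^ 2 * (1 - p) ^ 2 * (Rpower k (p + 1) + Rpower k (p - 3))
  - p * (1 - p) * (1 + 2 * p * (1 - p)) * Rpower k (p - 1).

Lemma is_derive_w p k : 0 < k -> is_derive (w p) k (dw p k).
Proof. intros Hk. unfold w, dw, Rpower. auto_derive; [lra|]. Rpower_field k p Hk. Qed.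

Lemma eta_decomposition p a k : 0 < k ->
  eta p a k = 2 * dw p k * Q p a k + w p k * dQ p a k + rho p k.
Proof. intros Hk. unfold eta, dw, Q, w, dQ, rho. Rpower_field k p Hk. Qed.

Lemma rho_neg p k : 0 < p < 1 -> 0 < k -> rho p k < 0.
Proof.
  intros Hp Hk. unfold rho.
  assert (0 < Rpower k (p + 1) + Rpower k (p - 3)) by (apply Rplus_lt_0_compat; apply exp_pos).
  assert (0 < Rpower k (p - 1)) by apply exp_pos.
  assert (0 < p ^ 2 * (1 - p) ^ 2) by (apply Rmult_lt_0_compat; apply pow_lt; lra).
  assert (0 < p * (1 - p) * (1 + 2 * p * (1 - p))) by (repeat apply Rmult_lt_0_compat; nra).
  nra.
Qed.

Definition W (p a k : R) := w p k * sqrt (Q p a k).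
Definition rho_integrand (p a k : R) := rho p k / sqrt (Q p a k).

Lemma is_derive_W p a k : 0 < k -> 0 < Q p a k ->
  is_derive (W p a) k ((Upsilon_integrand p a k - rho_integrand p a k) / 2).
Proof.
  intros Hk HQ.
  assert (D := is_derive_mult _ _ k _ _ (is_derive_w p k Hk)
    (is_derive_sqrt _ _ _ (is_derive_Q p a k Hk) HQ) Rmult_comm).
  replace ((Upsilon_integrand p a k - rho_integrand p a k) / 2) with
    (plus (mult (dw p k) (sqrt (Q p a k))) (mult (w p k) (dQ p a k / (2 * sqrt (Q p a k))))).
  { exact D. }
  unfold Upsilon_integrand, rho_integrand, plus, mult; simpl.
  rewrite eta_decomposition by exact Hk.
  assert (Hs := sqrt_lt_R0 _ HQ). assert (Hss := sqrt_sqrt _ (Rlt_le _ _ HQ)).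
  set (s := sqrt (Q p a k)) in *. rewrite <- Hss. field. lra.
Qed.

Ltac solve_continuous :=
  match goal with |- continuous ?f _ => apply (ex_derive_continuous f) end;
  unfold Rpower in *; auto_derive;
  repeat split; try lra;
  apply Rgt_not_eq, Rlt_gt;
  first [ apply sqrt_lt_R0; assumption
        | apply Rmult_lt_0_compat; [lra | apply sqrt_lt_R0; assumption] ].

Lemma continuous_rho_integrand p a x : 0 < x -> 0 < Q p a x ->
  continuous (rho_integrand p a) x.
Proof. intros Hx HQ. unfold rho_integrand, rho, Q in *. solve_continuous. Qed.

Lemma continuous_Upsilon_integrand p a x : 0 < x -> 0 < Q p a x ->
  continuous (Upsilon_integrand p a) x.
Proof. intros Hx HQ. unfold Upsilon_integrand, eta, Q in *. solve_continuous. Qed.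

Lemma continuous_rho_dQ p a c x : 0 < x ->
  continuous (fun k => rho p k - c * dQ p a k / 2) x.
Proof.
  intros Hx. unfold rho, dQ. assert (0 < Rpower x (2 * p)) by apply exp_pos. solve_continuous.
Qed.

Lemma continuous_sqrt_Q p a x : 0 < x -> continuous (fun k => sqrt (Q p a k)) x.
Proof.
  intros Hx. apply continuous_sqrt_comp, (ex_derive_continuous (Q p a)).
  eexists. apply is_derive_Q, Hx.
Qed.

Lemma continuous_W p a x : 0 < x -> continuous (W p a) x.
Proof.
  intros Hx. apply (continuous_mult (w p)); [|apply continuous_sqrt_Q, Hx].
  apply (ex_derive_continuous (w p)). eexists. apply is_derive_w, Hx.
Qed.

(* Near a simple root [x0] of [Q], [rho / sqrt Q] is bounded below by [(c sqrt Q)'];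
   [c] is chosen so that [rho - c Q' / 2] equals [1/2] at [x0]. *)
Lemma rho_integrand_ge_near_root p a x0 : 0 < p < 1 -> 0 < x0 -> Q p a x0 = 0 ->
  x0 <> kappa0 p -> exists (c : R) (d : posreal), forall x, Rabs (x - x0) < d ->
  0 < Q p a x -> c * (dQ p a x / (2 * sqrt (Q p a x))) <= rho_integrand p a x.
Proof.
  intros Hp Hx0 HQ0 Hk0. assert (HdQ := dQ_root_neq0 p a x0 Hp Hx0 HQ0 Hk0).
  set (c := (2 * rho p x0 - 1) / dQ p a x0).
  assert (Hc0 : rho p x0 - c * dQ p a x0 / 2 = / 2) by (unfold c; field; exact HdQ).
  destruct (continuous_rho_dQ p a c x0 Hx0 _
              (locally_ball _ (mkposreal (/ 2) (Rinv_0_lt_compat 2 Rlt_0_2)))) as [d Hd].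
  exists c, d. intros x Hxd HQ. specialize (Hd x Hxd).
  change (Rabs (rho p x - c * dQ p a x / 2 - (rho p x0 - c * dQ p a x0 / 2)) < / 2) in Hd.
  rewrite Hc0 in Hd. apply Rabs_def2 in Hd.
  assert (Hs := sqrt_lt_R0 _ HQ). unfold rho_integrand.
  replace (c * (dQ p a x / (2 * sqrt (Q p a x))))
    with ((c * dQ p a x / 2) / sqrt (Q p a x)) by (field; lra).
  apply Rmult_le_compat_r; [left; apply Rinv_0_lt_compat, Hs | lra].
Qed.

Section Roots.

Variables p a beta alpha : R.
Hypothesis Hp : 0 < p < 1.
Hypothesis Hbeta : 0 < beta.
Hypothesis Hbeta_alpha : beta < alpha.
Hypothesis Qbeta : Q p a beta = 0.
Hypothesis Qalpha : Q p a alpha = 0.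

Lemma V_lt_increasing u v : 0 < u -> u < v -> v <= kappa0 p -> V p a u < V p a v.
Proof.
  intros Hu Huv Hv. apply (is_derive_pos_lt (V p a) (dV p)); [exact Huv| |].
  - intros x Hx. apply is_derive_V. lra.
  - intros x Hx. apply dV_pos; lra.
Qed.

Lemma V_lt_decreasing u v : kappa0 p <= u -> u < v -> V p a v < V p a u.
Proof.
  intros Hu Huv. assert (H0 := kappa0_pos p Hp).
  apply Ropp_lt_cancel, (is_derive_pos_lt (fun k => - V p a k) (fun k => - dV p k));
    [exact Huv| |].
  - intros x Hx. apply (is_derive_opp (V p a)), is_derive_V. lra.
  - intros x Hx. assert (dV p x < 0) by (apply dV_neg; lra). lra.
Qed.

Lemma roots_around_kappa0 : beta < kappa0 p < alpha.
Proof.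
  assert (Vb := V_root p a beta Hbeta Qbeta).
  assert (Va := V_root p a alpha ltac:(lra) Qalpha).
  split.
  - destruct (Rlt_le_dec beta (kappa0 p)) as [|Hle]; [assumption|].
    assert (V p a alpha < V p a beta) by (apply V_lt_decreasing; lra). lra.
  - destruct (Rlt_le_dec (kappa0 p) alpha) as [|Hle]; [assumption|].
    assert (V p a beta < V p a alpha) by (apply V_lt_increasing; lra). lra.
Qed.

Lemma Q_pos_between x : beta < x < alpha -> 0 < Q p a x.
Proof.
  intros Hx. destruct roots_around_kappa0 as [Hbk Hka].
  assert (Vb := V_root p a beta Hbeta Qbeta).
  assert (Va := V_root p a alpha ltac:(lra) Qalpha).
  assert (0 < V p a x).
  { destruct (Rle_lt_dec x (kappa0 p)) as [Hxk | Hxk].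
    - assert (V p a beta < V p a x) by (apply V_lt_increasing; lra). lra.
    - assert (V p a alpha < V p a x) by (apply V_lt_decreasing; lra). lra. }
  rewrite Q_eq_V by lra. assert (0 < Rpower x (2 * (1 - p))) by apply exp_pos. nra.
Qed.

Lemma rho_integrand_neg x : beta < x < alpha -> rho_integrand p a x < 0.
Proof.
  intros Hx. assert (Hs := sqrt_lt_R0 _ (Q_pos_between x Hx)).
  assert (Hr := rho_neg p x Hp ltac:(lra)).
  unfold rho_integrand, Rdiv. assert (0 < / sqrt (Q p a x)) by (apply Rinv_0_lt_compat, Hs).
  nra.
Qed.

Definition Phi (x : R) := RInt (rho_integrand p a) ((beta + alpha) / 2) x.

Lemma is_derive_Phi x : beta < x < alpha -> is_derive Phi x (rho_integrand p a x).
Proof.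
  intros Hx. apply (is_derive_RInt (rho_integrand p a) Phi ((beta + alpha) / 2) x).
  - apply (locally_interval _ x beta alpha); try apply Hx. intros y Hby Hya.
    apply (@RInt_correct R_CompleteNormedModule), (@ex_RInt_continuous R_CompleteNormedModule).
    intros z Hz. assert (Hz' : beta < z < alpha).
    { apply (Rmin_Rmax_in_interval beta alpha ((beta + alpha) / 2) y); [lra | | exact Hz].
      split; assumption. }
    apply continuous_rho_integrand; [lra|]. apply Q_pos_between, Hz'.
  - apply continuous_rho_integrand; [lra|]. apply Q_pos_between, Hx.
Qed.

(* [Phi] is decreasing and moves less than [c sqrt Q], which tends to [0] at [x0]; so [Phi]
   is Cauchy at [x0]. *)
Lemma Phi_has_limit_at_root (Fl : (R -> Prop) -> Prop) {FF : ProperFilter Fl} x0 :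
  0 < x0 -> Q p a x0 = 0 -> x0 <> kappa0 p -> filter_le Fl (locally x0) ->
  Fl (fun x => beta < x < alpha) -> exists l, filterlim Phi Fl (locally l).
Proof.
  intros Hx0 HQ0 Hk0 HFl Hint.
  destruct (rho_integrand_ge_near_root p a x0 Hp Hx0 HQ0 Hk0) as (c & d & Hc).
  set (G x := c * sqrt (Q p a x)).
  set (P x := (beta < x < alpha) /\ Rabs (x - x0) < d).
  assert (Hdom : forall u v, P u -> P v -> u <= v -> Rabs (Phi v - Phi u) <= Rabs (G v - G u)).
  { intros u v [Hu Hud] [Hv Hvd] Huv.
    assert (HPx : forall x, u <= x <= v -> P x).
    { intros x Hx. apply Rabs_def2 in Hud. apply Rabs_def2 in Hvd.
      split; [lra|]. apply Rabs_def1; lra. }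
    apply (Rabs_increment_le_of_is_derive Phi G (rho_integrand p a)
             (fun x => c * (dQ p a x / (2 * sqrt (Q p a x))))); [exact Huv| |].
    - intros x Hx. destruct (HPx x Hx) as [Hxi _]. split.
      + apply is_derive_Phi, Hxi.
      + apply is_derive_scal, is_derive_sqrt; [apply is_derive_Q; lra|].
        apply Q_pos_between, Hxi.
    - intros x Hx. destruct (HPx x ltac:(lra)) as [Hxi Hxd].
      assert (rho_integrand p a x < 0) by (apply rho_integrand_neg, Hxi).
      assert (c * (dQ p a x / (2 * sqrt (Q p a x))) <= rho_integrand p a x)
        by (apply Hc; [exact Hxd | apply Q_pos_between, Hxi]).
      lra. }
  apply (filterlim_of_dominated_increments Phi G P 0).
  - apply filter_and; [exact Hint|]. apply HFl, (locally_ball x0 d).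
  - intros u v Hu Hv. destruct (Rle_or_lt u v) as [Huv | Hvu]; [exact (Hdom u v Hu Hv Huv)|].
    rewrite (Rabs_minus_sym (Phi v)), (Rabs_minus_sym (G v)). apply Hdom; auto; lra.
  - replace 0 with (G x0) by (unfold G; rewrite HQ0, sqrt_0; ring).
    apply (filterlim_filter_le_1 _ HFl), (continuous_mult (fun _ => c) (fun k => sqrt (Q p a k))).
    + apply continuous_const.
    + apply continuous_sqrt_Q, Hx0.
Qed.

Lemma Phi_decreasing u v : beta < u -> u < v -> v < alpha -> Phi v < Phi u.
Proof.
  intros Hu Huv Hv.
  apply Ropp_lt_cancel, (is_derive_pos_lt (fun x => - Phi x) (fun x => - rho_integrand p a x));
    [exact Huv| |].
  - intros x Hx. apply (is_derive_opp Phi), is_derive_Phi. lra.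
  - intros x Hx. assert (rho_integrand p a x < 0) by (apply rho_integrand_neg; lra). lra.
Qed.

Lemma Phi_limits_lt lb la :
  filterlim Phi (at_right beta) (locally lb) -> filterlim Phi (at_left alpha) (locally la) ->
  la < lb.
Proof.
  intros Hlb Hla.
  set (x1 := (2 * beta + alpha) / 3). set (x2 := (beta + 2 * alpha) / 3).
  assert (Hx : beta < x1 < x2 /\ x2 < alpha) by (unfold x1, x2; lra).
  assert (H1 : Phi x1 <= lb).
  { assert (Hle := filterlim_le (F := at_right beta) (fun _ => Phi x1) Phi (Phi x1) lb).
    simpl in Hle. apply Hle; [| apply filterlim_const | exact Hlb].
    eapply filter_imp; [|apply (at_right_interval beta x1); lra].
    intros x Hx'. apply Rlt_le, Phi_decreasing; lra. }
  assert (H2 : la <= Phi x2).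
  { assert (Hle := filterlim_le (F := at_left alpha) Phi (fun _ => Phi x2) la (Phi x2)).
    simpl in Hle. apply Hle; [| exact Hla | apply filterlim_const].
    eapply filter_imp; [|apply (at_left_interval x2 alpha); lra].
    intros x Hx'. apply Rlt_le, Phi_decreasing; lra. }
  assert (Phi x2 < Phi x1) by (apply Phi_decreasing; lra).
  lra.
Qed.

Definition Psi (x : R) := 2 * W p a x + Phi x.

Lemma is_derive_Psi x : beta < x < alpha -> is_derive Psi x (Upsilon_integrand p a x).
Proof.
  intros Hx. assert (HQ := Q_pos_between x Hx).
  assert (D := is_derive_plus _ _ x _ _
    (is_derive_scal _ x 2 _ (is_derive_W p a x ltac:(lra) HQ)) (is_derive_Phi x Hx)).
  replace (Upsilon_integrand p a x) with
    (plus (2 * ((Upsilon_integrand p a x - rho_integrand p a x) / 2)) (rho_integrand p a x))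
    by (unfold plus; simpl; field).
  exact D.
Qed.

Lemma Psi_limit_at_root (Fl : (R -> Prop) -> Prop) {FF : Filter Fl} x0 l :
  0 < x0 -> Q p a x0 = 0 -> filter_le Fl (locally x0) ->
  filterlim Phi Fl (locally l) -> filterlim Psi Fl (locally l).
Proof.
  intros Hx0 HQ0 HFl Hl.
  assert (HW : filterlim (fun x => 2 * W p a x) Fl (locally (2 * 0))).
  { apply (filterlim_comp _ _ _ (W p a) (fun z => 2 * z) Fl (locally 0)).
    - replace 0 with (W p a x0) by (unfold W; rewrite HQ0, sqrt_0; ring).
      apply (filterlim_filter_le_1 _ HFl), continuous_W, Hx0.
    - apply (filterlim_scal_r (K := R_AbsRing) (V := R_NormedModule) 2 0). }
  replace l with (2 * 0 + l) by ring.
  apply (filterlim_comp_2 _ Phi Rplus HW Hl).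
  apply (filterlim_plus (K := R_AbsRing) (V := R_NormedModule)).
Qed.

Lemma is_RInt_gen_Upsilon_integrand lb la :
  filterlim Phi (at_right beta) (locally lb) -> filterlim Phi (at_left alpha) (locally la) ->
  is_RInt_gen (Upsilon_integrand p a) (at_right beta) (at_left alpha) (la - lb).
Proof.
  intros Hlb Hla. set (m := (beta + alpha) / 2).
  assert (Hin : filter_prod (at_right beta) (at_left alpha) (fun ab =>
    forall x, Rmin (fst ab) (snd ab) <= x <= Rmax (fst ab) (snd ab) -> beta < x < alpha)).
  { apply (Filter_prod _ _ _ (fun x => beta < x < m) (fun y => m < y < alpha)).
    - apply at_right_interval. unfold m; lra.
    - apply at_left_interval. unfold m; lra.
    - intros x y Hx Hy z Hz. apply (Rmin_Rmax_in_interval _ _ x y); [lra | lra | exact Hz]. }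
  assert (HD : forall x, beta < x < alpha -> Derive Psi x = Upsilon_integrand p a x)
    by (intros x Hx; apply is_derive_unique, is_derive_Psi, Hx).
  apply (is_RInt_gen_ext (Derive Psi)).
  - eapply filter_imp; [|exact Hin]. intros [u v] Huv x Hx. apply HD, Huv. simpl in *. lra.
  - apply is_RInt_gen_Derive.
    + eapply filter_imp; [|exact Hin]. intros [u v] Huv x Hx.
      eexists. apply is_derive_Psi, Huv, Hx.
    + eapply filter_imp; [|exact Hin]. intros [u v] Huv x Hx.
      specialize (Huv x Hx). simpl in Huv.
      apply (continuous_ext_loc _ (Upsilon_integrand p a)).
      * apply (locally_interval _ x beta alpha); try apply Huv.
        intros y Hby Hya. symmetry. apply HD. split; assumption.
      * apply continuous_Upsilon_integrand; [lra|]. apply Q_pos_between, Huv.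
    + apply (Psi_limit_at_root _ beta); [lra | exact Qbeta | apply filter_le_within | exact Hlb].
    + apply (Psi_limit_at_root _ alpha); [lra | exact Qalpha | apply filter_le_within | exact Hla].
Qed.

End Roots.

Theorem mainTheorem12 (p a beta alpha : R) :
  0 < p < 1 -> a_star p < a ->
  0 < beta -> beta < alpha -> Q p a beta = 0 -> Q p a alpha = 0 ->
  exists v : R,
    is_RInt_gen (Upsilon_integrand p a) (at_right beta) (at_left alpha) v
    /\ v < 0.
Proof.
  intros Hp _ Hbeta Hba Qbeta Qalpha.
  destruct (roots_around_kappa0 p a beta alpha Hp Hbeta Hba Qbeta Qalpha) as [Hbk Hka].
  destruct (Phi_has_limit_at_root p a beta alpha Hp Hbeta Hba Qbeta Qalpha (at_right beta) beta)
    as [lb Hlb]; [lra | exact Qbeta | lra | apply filter_le_within | now apply at_right_interval |].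
  destruct (Phi_has_limit_at_root p a beta alpha Hp Hbeta Hba Qbeta Qalpha (at_left alpha) alpha)
    as [la Hla]; [lra | exact Qalpha | lra | apply filter_le_within | now apply at_left_interval |].
  exists (la - lb). split.
  - exact (is_RInt_gen_Upsilon_integrand p a beta alpha Hp Hbeta Hba Qbeta Qalpha lb la Hlb Hla).
  - apply Rlt_minus.
    exact (Phi_limits_lt p a beta alpha Hp Hbeta Hba Qbeta Qalpha lb la Hlb Hla).
Qed.
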